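(* Let $H\in\mathbb R^{d\times p}$ have rank $d$ and let $\prec$ be a partial order on $[d]$. Then there exists a unique partial order RQ decomposition $H=RQ$ of $H$ with respect to $\prec$. If moreover $\prec$ is consistent with the total order $1,2,\dots,d$ (i.e. $i\prec j$ implies $i<j$), then this decomposition is produced by the following procedure: for $i=d,d-1,\dots,1$, let $\mathbf h_i$ be the $i$-th row of $H$, let $W_i=\langle\mathbf q_j:j\succ i\rangle$, set $\mathbf q_i:=\mathrm{proj}_{W_i^\perp}\mathbf h_i/\|\mathrm{proj}_{W_i^\perp}\mathbf h_i\|_2$ as the $i$-th row of $Q$, let $Q_{\succeq i}$ be the submatrix of $Q$ consisting of the rows $\mathbf q_j$ with $j\succeq i$, let $\mathbf r:=(Q_{\succeq i}^\top)^\dagger\mathbf h_i^\top$, and set $R_{ij}$ equal to the entry of $\mathbf r$ corresponding to row $j$ for each $j\succeq i$, and $R_{ij}=0$ otherwise.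
   Context: $[d]=\{1,\dots,d\}$; $i\preceq j$ means $i\prec j$ or $i=j$; $\langle\cdot\rangle$ denotes linear span; $M^\dagger$ the Moore–Penrose pseudoinverse. Given a partial order $\prec$ on $[d]$, a partial order RQ decomposition of $H\in\mathbb R^{d\times p}$ is a factorization $H=RQ$ with $R\in\mathbb R^{d\times d}$ satisfying $R_{ii}\ge0$ and $R_{ij}=0$ unless $i\preceq j$, and $Q\in\mathbb R^{d\times p}$ whose $i$-th row $\mathbf q_i$ has Euclidean norm $1$ and is orthogonal to $\langle\mathbf q_j:i\prec j\rangle$. *)

From HB Require Import structures.
From mathcomp Require Import all_boot all_order all_algebra.
From mathcomp Require Import reals.
Set Implicit Arguments. Unset Strict Implicit. Unset Printing Implicit Defensive.
Import Order.TTheory GRing.Theory Num.Theory.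
Local Open Scope ring_scope.

Section Defs.
Variable R : realType.

Definition strict_porder (d : nat) (ord : rel 'I_d) :=
  irreflexive ord /\ transitive ord.

Definition preceq (d : nat) (ord : rel 'I_d) (i j : 'I_d) : bool :=
  ord i j || (i == j).

Definition dotr (p : nat) (u v : 'rV[R]_p) : R := \sum_(k < p) u 0 k * v 0 k.
Definition norm2 (p : nat) (u : 'rV[R]_p) : R := Num.sqrt (dotr u u).

Definition span_succ (d p : nat) (ord : rel 'I_d) (Q : 'M[R]_(d, p)) (i : 'I_d)
  : 'M[R]_p := (\sum_(j | ord i j) <<row j Q>>)%MS.

Definition is_porq (d p : nat) (ord : rel 'I_d) (H : 'M[R]_(d, p))
    (Rm : 'M[R]_d) (Q : 'M[R]_(d, p)) : Prop :=
  [/\ H = Rm *m Q,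
      (forall i, 0 <= Rm i i),
      (forall i j, ~~ preceq ord i j -> Rm i j = 0),
      (forall i, norm2 (row i Q) = 1)
    & (forall i (w : 'rV[R]_p), (w <= span_succ ord Q i)%MS ->
         dotr (row i Q) w = 0)].

Definition is_proj_perp (p : nat) (W : 'M[R]_p) (h v : 'rV[R]_p) : Prop :=
  (forall w : 'rV[R]_p, (w <= W)%MS -> dotr v w = 0) /\ (h - v <= W)%MS.

Definition is_MP_pinv (m n : nat) (A : 'M[R]_(m, n)) (X : 'M[R]_(n, m)) : Prop :=
  [/\ A *m X *m A = A, X *m A *m X = X,
      (A *m X)^T = A *m X & (X *m A)^T = X *m A].

Definition succeq_set (d : nat) (ord : rel 'I_d) (i : 'I_d) : {set 'I_d} :=
  [set j | preceq ord i j].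

Definition procedure_step (d p : nat) (ord : rel 'I_d) (H : 'M[R]_(d, p))
    (Rm : 'M[R]_d) (Q : 'M[R]_(d, p)) (i : 'I_d) : Prop :=
  (exists v : 'rV[R]_p,
     [/\ is_proj_perp (span_succ ord Q i) (row i H) v, v != 0 &
         row i Q = (norm2 v)^-1 *: v]) /\
  (* Q_{⪰i}: rows j ⪰ i of Q, in increasing order of j *)
  let S := succeq_set ord i in
  let Qsub := rowsub (fun t : 'I_#|S| => enum_val t) Q in
  exists X : 'M[R]_(#|S|, p),
    [/\ is_MP_pinv Qsub^T X,
        (forall t : 'I_#|S|, Rm i (enum_val t) = (X *m (row i H)^T) t 0)
      & (forall j, j \notin S -> Rm i j = 0)].

Definition procedure_output (d p : nat) (ord : rel 'I_d) (H : 'M[R]_(d, p))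
    (Rm : 'M[R]_d) (Q : 'M[R]_(d, p)) : Prop :=
  forall i, procedure_step ord H Rm Q i.

End Defs.

From HB Require Import structures.
From mathcomp Require Import all_boot all_order all_algebra.
From mathcomp Require Import reals.
Set Implicit Arguments. Unset Strict Implicit. Unset Printing Implicit Defensive.
Import Order.TTheory GRing.Theory Num.Theory.
Local Open Scope ring_scope.

(* Row i of H = RQ reads h_i = R_ii q_i + \sum_(i ≺ k) R_ik q_k, so R_ii q_i is
   the orthogonal projection of h_i onto the orthogonal complement of
   W_i = <q_k : i ≺ k>.  Inductively W_i lies in the span of the h_k with
   i ≺ k, so by independence of the rows of H this projection is nonzero.
   Thus q_i and R_ii are determined by the q_k with i ≺ k: this gives
   uniqueness by well-founded induction along ≻, and existence by filling in
   the rows one at a time, each time at an index whose successors are all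
   done.  The pseudoinverse step of the procedure just recovers the
   coefficients of h_i on the independent rows of Q_{⪰ i}, so consistency of
   ≺ with 1, ..., d is never needed. *)

Section StrictOrder.
Variables (T : finType) (ord : rel T).
Hypotheses (ord_irr : irreflexive ord) (ord_trans : transitive ord).

Lemma strict_porder_ind (P : T -> Prop) :
  (forall i, (forall j, ord i j -> P j) -> P i) -> forall i, P i.
Proof.
move=> IH; suff: forall n i, (#|[set j | ord i j]| < n)%N -> P i.
  by move=> + i; apply; apply: ltnSn.
elim=> [//|n IHn] i; rewrite ltnS => lt_n; apply: IH => j ij; apply: IHn.
apply: leq_trans lt_n; apply: proper_card; apply/properP; split.
  by apply/subsetP => k; rewrite !inE; apply: ord_trans.
by exists j; rewrite !inE ?ij ?ord_irr.
Qed.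

Lemma exists_maximal_notin (U : {set T}) i0 : i0 \notin U ->
  exists2 i, i \notin U & forall k, ord i k -> k \in U.
Proof.
elim/strict_porder_ind: i0 => i0 IH i0U.
have [succU | /forallPn [k]] := boolP [forall k, ord i0 k ==> (k \in U)].
  by exists i0 => // k; apply/implyP/(forallP succU).
by rewrite negb_imply => /andP [i0k kU]; apply: IH kU.
Qed.

End StrictOrder.

Section RowSpaces.
Variable F : fieldType.

Lemma submxB m1 m2 n (A B : 'M[F]_(m1, n)) (C : 'M[F]_(m2, n)) :
  (A <= C)%MS -> (B <= C)%MS -> (A - B <= C)%MS.
Proof. by move=> sAC sBC; apply: addmx_sub; rewrite ?eqmx_opp. Qed.

Lemma mulmx_eq_support m n (c : 'rV[F]_m) (A B : 'M[F]_(m, n)) :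
  (forall k, c 0 k != 0 -> row k A = row k B) -> c *m A = c *m B.
Proof.
move=> eqAB; rewrite !mulmx_sum_row; apply: eq_bigr => k _.
by have [->|/eqAB ->] := eqVneq (c 0 k) 0; rewrite ?scale0r.
Qed.

Lemma rowsub_free m m' n (f : 'I_m' -> 'I_m) (A : 'M[F]_(m, n)) :
  row_free A -> injective f -> row_free (rowsub f A).
Proof.
move=> freeA f_inj; apply: inj_row_free => x.
rewrite rowsubE mulmxA => /eqP; rewrite mulmx_free_eq0 // => /eqP /rowP xf0.
apply/rowP => t; have := xf0 (f t); rewrite !mxE (bigD1 t) //= !mxE eqxx mulr1.
rewrite big1 ?addr0 // => s neq_st.
by rewrite !mxE (inj_eq f_inj) (negbTE neq_st) mulr0.
Qed.

Lemma mulmx_rowsub_enum m n (S : {set 'I_m}) (c : 'rV[F]_m) (A : 'M[F]_(m, n)) :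
  (forall k, k \notin S -> c 0 k = 0) ->
  c *m A = (\row_(t < #|S|) c 0 (enum_val t))
             *m rowsub (fun t : 'I_#|S| => enum_val t) A.
Proof.
move=> c_S; rewrite !mulmx_sum_row (bigID (mem S)) /= [X in _ + X]big1 ?addr0.
  by rewrite big_enum_val; apply: eq_bigr => t _; rewrite !mxE row_rowsub.
by move=> k /c_S ->; rewrite scale0r.
Qed.

Definition mask_mx m n (P : pred 'I_m) (A : 'M[F]_(m, n)) : 'M[F]_(m, n) :=
  \matrix_k (if P k then row k A else 0).

Definition set_row m n (A : 'M[F]_(m, n)) i (u : 'rV[F]_n) : 'M[F]_(m, n) :=
  \matrix_k (if k == i then u else row k A).

Lemma set_rowE m n (A : 'M[F]_(m, n)) i u k j :
  set_row A i u k j = if k == i then u 0 j else A k j.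
Proof. by rewrite mxE; case: eqP; rewrite ?mxE. Qed.

Lemma row_set_row_id m n (A : 'M[F]_(m, n)) i u : row i (set_row A i u) = u.
Proof. by rewrite rowK eqxx. Qed.

Lemma row_set_row_neq m n (A : 'M[F]_(m, n)) i k u :
  k != i -> row k (set_row A i u) = row k A.
Proof. by rewrite rowK => /negbTE ->. Qed.

Section Mask.
Variables (m n : nat) (A : 'M[F]_(m, n)).

Lemma sub_mask_mxP (P : pred 'I_m) (v : 'rV[F]_n) : (v <= mask_mx P A)%MS ->
  exists2 c : 'rV_m, forall k, ~~ P k -> c 0 k = 0 & v = c *m A.
Proof.
case/submxP => x ->; exists (\row_k (if P k then x 0 k else 0)).
  by move=> k /negbTE Pk; rewrite mxE Pk.
rewrite !mulmx_sum_row; apply: eq_bigr => k _; rewrite rowK mxE.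
by case: (P k); rewrite ?scaler0 ?scale0r.
Qed.

Lemma row_sub_mask_mx (P : pred 'I_m) i : P i -> (row i A <= mask_mx P A)%MS.
Proof. by move=> Pi; apply: (eq_row_sub i); rewrite rowK Pi. Qed.

Lemma mask_mx_sub (P1 P2 : pred 'I_m) :
  (forall k, P1 k -> P2 k) -> (mask_mx P1 A <= mask_mx P2 A)%MS.
Proof.
move=> P12; apply/row_subP => k; rewrite rowK.
by case: ifP => [/P12 /row_sub_mask_mx | _]; rewrite ?sub0mx.
Qed.

Lemma row_free_mask_mx (P : pred 'I_m) i :
  row_free A -> ~~ P i -> ~~ (row i A <= mask_mx P A)%MS.
Proof.
move=> freeA Pi; apply/negP => /sub_mask_mxP [c c_P eq_ci].
have : ('e_i - c) *m A == 0 by rewrite mulmxBl -rowE -eq_ci subrr.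
rewrite mulmx_free_eq0 // => /eqP /rowP /(_ i).
by rewrite !mxE c_P // !eqxx subr0 => /eqP; rewrite oner_eq0.
Qed.

End Mask.
End RowSpaces.

Section InnerProduct.
Variables (R : realType) (p : nat).
Implicit Types (u v w h : 'rV[R]_p) (W : 'M[R]_p).

Lemma dotrE u v : dotr u v = (u *m v^T) 0 0.
Proof. by rewrite /dotr mxE; apply: eq_bigr => k _; rewrite mxE. Qed.

Lemma dotrZl a u v : dotr (a *: u) v = a * dotr u v.
Proof. by rewrite !dotrE -scalemxAl mxE. Qed.

Lemma dotrZr a u v : dotr u (a *: v) = a * dotr u v.
Proof. by rewrite !dotrE linearZ /= -scalemxAr mxE. Qed.

Lemma dotrBl u u' v : dotr (u - u') v = dotr u v - dotr u' v.
Proof. by rewrite !dotrE mulmxBl mxE [X in _ + X]mxE. Qed.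

Lemma dotr_ge0 u : 0 <= dotr u u.
Proof. by apply: sumr_ge0 => k _; rewrite -expr2 sqr_ge0. Qed.

Lemma dotr_eq0 u : (dotr u u == 0) = (u == 0).
Proof.
apply/eqP/eqP => [uu0|->]; last first.
  by rewrite /dotr big1 // => k _; rewrite mxE mul0r.
apply/rowP => k; apply/eqP; rewrite mxE -[_ == 0]orbb -mulf_eq0; apply/eqP.
by move/psumr_eq0P: uu0 => -> // l _; rewrite -expr2 sqr_ge0.
Qed.

Lemma norm2Z a u : norm2 (a *: u) = `|a| * norm2 u.
Proof.
by rewrite /norm2 dotrZl dotrZr mulrA -expr2 sqrtrM ?sqr_ge0 // sqrtr_sqr.
Qed.

Lemma norm2_gt0 u : (0 < norm2 u) = (u != 0).
Proof. by rewrite /norm2 sqrtr_gt0 lt_def dotr_ge0 andbT dotr_eq0. Qed.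

Lemma orth_sub_eq0 u W :
  (u <= W)%MS -> (forall w, (w <= W)%MS -> dotr u w = 0) -> u = 0.
Proof. by move=> uW orth_u; apply/eqP; rewrite -dotr_eq0 orth_u. Qed.

Lemma gram_unit m (B : 'M[R]_(m, p)) : row_free B -> B *m B^T \in unitmx.
Proof.
move=> freeB; rewrite -row_free_unit; apply: inj_row_free => x xBB0.
apply/eqP; rewrite -(mulmx_free_eq0 _ freeB) -dotr_eq0 dotrE trmx_mul mulmxA.
by rewrite -(mulmxA x) xBB0 mul0mx mxE.
Qed.

Lemma proj_perp_exists W h : exists v, is_proj_perp W h v.
Proof.
have [B freeB eqBW] : exists2 B : 'M_(\rank W, p), row_free B & (B :=: W)%MS.
  by exists (row_base W); [apply: row_base_free | apply: eq_row_base].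
set v := h - h *m B^T *m invmx (B *m B^T) *m B.
have vB0 : v *m B^T = 0.
  by rewrite mulmxBl -!mulmxA mulVmx ?gram_unit // mulmx1 subrr.
exists v; split; last by rewrite opprB addrC subrK -eqBW submxMl.
move=> w; rewrite -eqBW => /submxP [x ->].
by rewrite dotrE trmx_mul mulmxA vB0 mul0mx mxE.
Qed.

Lemma proj_perp_unique W h v1 v2 :
  is_proj_perp W h v1 -> is_proj_perp W h v2 -> v1 = v2.
Proof.
move=> [orth1 hv1W] [orth2 hv2W]; apply/eqP; rewrite -subr_eq0; apply/eqP.
have vW : (v1 - v2 <= W)%MS.
  have -> : v1 - v2 = (h - v2) - (h - v1).
    by rewrite opprB [RHS]addrC addrA subrK.
  exact: submxB.
apply: (orth_sub_eq0 vW) => w wW.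
by rewrite dotrBl orth1 // orth2 // subrr.
Qed.

Lemma is_MP_pinv_trmx_row_free m (B : 'M[R]_(m, p)) : row_free B ->
  is_MP_pinv B^T (invmx (B *m B^T) *m B) /\
  invmx (B *m B^T) *m B *m B^T = 1%:M.
Proof.
move=> /gram_unit BB_unit.
have XB1 : invmx (B *m B^T) *m B *m B^T = 1%:M by rewrite -mulmxA mulVmx.
split=> //; split; rewrite ?XB1 ?mul1mx ?trmx1 //.
  by rewrite -mulmxA XB1 mulmx1.
by rewrite !trmx_mul trmxK trmx_inv trmx_mul trmxK mulmxA.
Qed.

End InnerProduct.

Section PartialOrderRQ.
Variables (R : realType) (d p : nat) (H : 'M[R]_(d, p)) (ord : rel 'I_d).
Hypotheses (ord_irr : irreflexive ord) (ord_trans : transitive ord).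
Hypothesis freeH : row_free H.
Implicit Types (Rm : 'M[R]_d) (Q : 'M[R]_(d, p)) (U : {set 'I_d}).

Definition porq_row Rm Q i :=
  [/\ row i H = row i Rm *m Q, 0 <= Rm i i,
      forall k, ~~ preceq ord i k -> Rm i k = 0, norm2 (row i Q) = 1
    & forall w, (w <= span_succ ord Q i)%MS -> dotr (row i Q) w = 0].

Lemma is_porqP Rm Q : is_porq ord H Rm Q <-> forall i, porq_row Rm Q i.
Proof.
split=> [[eH Rii_ge0 Rm0 normQ orthQ] i | rowsRQ].
  by split; [rewrite eH row_mul | apply: Rii_ge0 | apply: Rm0 | apply: normQ
            | apply: orthQ].
split; try by move=> i; case: (rowsRQ i).
by apply/row_matrixP => i; rewrite row_mul; case: (rowsRQ i).
Qed.

Definition succ_closed U := forall j k, j \in U -> ord j k -> k \in U.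

Lemma sum_succ_sub_span_succ (a : 'I_d -> R) Q i :
  ((\sum_(k | ord i k) a k *: row k Q)%R <= span_succ ord Q i)%MS.
Proof.
apply: summx_sub => k ik; apply: scalemx_sub.
by apply: (sumsmx_sup k) => //; rewrite genmxE.
Qed.

Lemma span_succ_sub_mask Q i : (span_succ ord Q i <= mask_mx (ord i) Q)%MS.
Proof. by apply/sumsmx_subP => k ik; rewrite genmxE row_sub_mask_mx. Qed.

Lemma span_succ_sub_mask_rows Q i :
  (forall k, ord i k -> (row k Q <= mask_mx (preceq ord k) H)%MS) ->
  (span_succ ord Q i <= mask_mx (ord i) H)%MS.
Proof.
move=> rowsQ; apply/sumsmx_subP => k ik; rewrite genmxE.
apply: submx_trans (rowsQ k ik) (mask_mx_sub _ _) => l /orP [kl | /eqP <- //].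
exact: ord_trans kl.
Qed.

Lemma porq_row_proj Rm Q i : porq_row Rm Q i ->
  is_proj_perp (span_succ ord Q i) (row i H) (Rm i i *: row i Q).
Proof.
case=> eH _ Rm0 _ orthQ; split=> [w wW|]; first by rewrite dotrZl orthQ ?mulr0.
suff -> : row i H = Rm i i *: row i Q + \sum_(k | ord i k) Rm i k *: row k Q.
  by rewrite addrC addKr sum_succ_sub_span_succ.
rewrite eH mulmx_sum_row (bigD1 i) //= mxE; congr (_ + _).
rewrite [LHS]big_mkcond [RHS]big_mkcond; apply: eq_bigr => k _ /=.
have [-> | neq_ki] := eqVneq k i; first by rewrite ord_irr.
have [// | nik] := boolP (ord i k); first by rewrite mxE.
by rewrite mxE Rm0 ?scale0r // negb_or nik eq_sym.
Qed.

Lemma proj_perp_row_neq0 W i v : (W <= mask_mx (ord i) H)%MS ->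
  is_proj_perp W (row i H) v -> v != 0.
Proof.
move=> WH [_ hvW]; have := row_free_mask_mx freeH (negbT (ord_irr i)).
apply: contraNneq => v0.
by apply: submx_trans WH; rewrite -[row i H]subr0 -v0.
Qed.

Lemma porq_row_pos_span Rm Q i :
  porq_row Rm Q i -> (span_succ ord Q i <= mask_mx (ord i) H)%MS ->
  0 < Rm i i /\ (row i Q <= mask_mx (preceq ord i) H)%MS.
Proof.
move=> rowRQ WH; have projRQ := porq_row_proj rowRQ.
have := proj_perp_row_neq0 WH projRQ.
rewrite scaler_eq0 negb_or => /andP [Rii0 _].
split; first by rewrite lt_def Rii0; case: rowRQ.
have -> : row i Q = (Rm i i)^-1 *: (row i H - (row i H - Rm i i *: row i Q)).
  by rewrite opprB addrC subrK scalerA mulVf ?scale1r.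
apply/scalemx_sub/submxB; first by rewrite row_sub_mask_mx // /preceq eqxx orbT.
apply: submx_trans projRQ.2 (submx_trans WH (mask_mx_sub _ _)) => k ik.
by rewrite /preceq ik.
Qed.

Lemma porq_rows_pos_span U Rm Q : succ_closed U ->
    {in U, forall i, porq_row Rm Q i} ->
  {in U, forall i, 0 < Rm i i /\ (row i Q <= mask_mx (preceq ord i) H)%MS}.
Proof.
move=> closedU rowsRQ i.
elim/(strict_porder_ind ord_irr ord_trans): i => i IH iU.
apply: porq_row_pos_span (rowsRQ i iU) (span_succ_sub_mask_rows _) => k ik.
by case: (IH k ik (closedU i k iU ik)).
Qed.

Lemma porq_diag_gt0 Rm Q i : is_porq ord H Rm Q -> 0 < Rm i i.
Proof.
move=> /is_porqP rowsRQ.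
have closedT : succ_closed setT by move=> j k _ _; apply: in_setT.
by have [] := porq_rows_pos_span closedT (fun j _ => rowsRQ j) (in_setT i).
Qed.

Lemma porq_row_free Rm Q : is_porq ord H Rm Q -> row_free Q.
Proof.
case=> eH _ _ _ _; rewrite /row_free eqn_leq rank_leq_row /=.
by rewrite -{1}(eqP freeH) eH mxrankM_maxr.
Qed.

Lemma porq_unique R1 Q1 R2 Q2 :
  is_porq ord H R1 Q1 -> is_porq ord H R2 Q2 -> R1 = R2 /\ Q1 = Q2.
Proof.
move=> porq1 porq2.
have /is_porqP rows1 := porq1; have /is_porqP rows2 := porq2.
have eQ : Q1 = Q2.
  apply/row_matrixP; elim/(strict_porder_ind ord_irr ord_trans) => i IH.
  have eW : span_succ ord Q1 i = span_succ ord Q2 i.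
    by apply: eq_bigr => k /IH ->.
  have proj2 := porq_row_proj (rows2 i); rewrite -eW in proj2.
  have eRQ := proj_perp_unique (porq_row_proj (rows1 i)) proj2.
  have eRii : R1 i i = R2 i i.
    have [[_ _ _ normQ1 _] [_ _ _ normQ2 _]] := (rows1 i, rows2 i).
    move/(congr1 (@norm2 R p)): eRQ; rewrite !norm2Z normQ1 normQ2 !mulr1.
    by rewrite !gtr0_norm ?(porq_diag_gt0 _ porq1) ?(porq_diag_gt0 _ porq2).
  move: eRQ; rewrite eRii => /scalerI; apply.
  by rewrite gt_eqF ?(porq_diag_gt0 _ porq2).
split=> //; apply: (row_free_inj (porq_row_free porq1)).
by case: porq1 porq2 => [eH1 _ _ _ _] [eH2 _ _ _ _]; rewrite /= -eH1 eQ -eH2.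
Qed.

Lemma porq_row_local Rm Q Rm' Q' i :
    row i Rm' = row i Rm -> (forall k, preceq ord i k -> row k Q' = row k Q) ->
  porq_row Rm Q i -> porq_row Rm' Q' i.
Proof.
move=> eRow eQ [eH Rii_ge0 Rm0 normQ orthQ].
have eRm k : Rm' i k = Rm i k by move/rowP/(_ k): eRow; rewrite !mxE.
have eW : span_succ ord Q' i = span_succ ord Q i.
  by apply: eq_bigr => k ik; rewrite eQ // /preceq ik.
split; rewrite ?eRm ?eQ ?eW ?/preceq ?eqxx ?orbT //.
  rewrite eH eRow; apply: mulmx_eq_support => k; rewrite mxE => Rik0.
  by apply/esym/eQ; apply: contraNT Rik0 => /Rm0 ->.
by move=> k /Rm0; rewrite eRm.
Qed.

(* [q_i] is the normalized projection [v] of [h_i] onto the complement of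
   [W_i]; the coefficients of [h_i - v], which lies in [W_i], on the rows of
   [Q] give the off-diagonal entries of row [i] of [R]. *)
Lemma porq_row_extend Rm Q i :
    (span_succ ord Q i <= mask_mx (ord i) H)%MS ->
  exists r q, porq_row (set_row Rm i r) (set_row Q i q) i.
Proof.
set W := span_succ ord Q i => WH.
have [v projv] := proj_perp_exists W (row i H).
have v_gt0 : 0 < norm2 v by rewrite norm2_gt0 (proj_perp_row_neq0 WH projv).
have [c c0 eHv] :=
  sub_mask_mxP (submx_trans projv.2 (span_succ_sub_mask Q i)).
set Q' := set_row Q i ((norm2 v)^-1 *: v).
have eW : span_succ ord Q' i = W.
  apply: eq_bigr => k ik; rewrite row_set_row_neq //.
  by apply: contraTneq ik => ->; rewrite ord_irr.
have eRow k : (norm2 v *: 'e_i + c) 0 k = norm2 v * (k == i)%:R + c 0 k.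
  by rewrite !mxE eqxx.
exists (norm2 v *: 'e_i + c), ((norm2 v)^-1 *: v); split.
- rewrite row_set_row_id mulmxDl -scalemxAl -rowE row_set_row_id scalerA.
  rewrite mulfV ?gt_eqF // scale1r -[row i H](subrK v) eHv addrC; congr (_ + _).
  apply: mulmx_eq_support => k ck; rewrite row_set_row_neq //.
  by apply: contraNneq ck => ->; rewrite c0 ?ord_irr.
- by rewrite set_rowE eqxx eRow eqxx c0 ?ord_irr ?mulr1 ?addr0 ?ltW.
- move=> k; rewrite /preceq negb_or => /andP [nik nik'].
  by rewrite set_rowE eqxx eRow eq_sym (negbTE nik') mulr0 c0 ?add0r.
- by rewrite row_set_row_id norm2Z ger0_norm ?invr_ge0 ?ltW // mulVf ?gt_eqF.
- by move=> w; rewrite eW row_set_row_id dotrZl => /projv.1 ->; rewrite mulr0.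
Qed.

Lemma porq_rows_complete U Rm Q : succ_closed U ->
    {in U, forall i, porq_row Rm Q i} ->
  exists Rm' Q', forall i, porq_row Rm' Q' i.
Proof.
move cardUC: #|~: U| => n.
elim: n U Rm Q cardUC => [|n IH] U Rm Q cardUC closedU rowsRQ.
  exists Rm, Q => i; apply: rowsRQ.
  by move/cards0_eq: cardUC => UC0; rewrite -[U]setCK UC0 setC0 in_setT.
have [i0 i0U] : exists i0, i0 \notin U.
  have /card_gt0P [i0] : (0 < #|~: U|)%N by rewrite cardUC.
  by rewrite inE; exists i0.
have [i iU succ_iU] := exists_maximal_notin ord_irr ord_trans i0U.
have WH : (span_succ ord Q i <= mask_mx (ord i) H)%MS.
  apply: span_succ_sub_mask_rows => k /succ_iU kU.
  by case: (porq_rows_pos_span closedU rowsRQ kU).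
have [r [q rowi]] := porq_row_extend Rm WH.
apply: (IH (i |: U) (set_row Rm i r) (set_row Q i q)).
- move: cardUC; rewrite (cardsD1 i) inE iU add1n setCU setIC -setDE.
  by case.
- move=> j k; rewrite !in_setU1 => /predU1P [-> /succ_iU | /closedU jk /jk] kU;
    by rewrite kU orbT.
- move=> j; rewrite in_setU1 => /predU1P [-> // | jU].
  have neq_ji : j != i by apply: contraTneq jU => ->.
  apply: porq_row_local (rowsRQ j jU); first exact: row_set_row_neq.
  move=> k /orP [/(closedU j k jU) kU | /eqP <-]; apply: row_set_row_neq => //.
  by apply: contraTneq kU => ->.
Qed.

Lemma porq_exists : exists Rm Q, is_porq ord H Rm Q.
Proof.
have closed0 : succ_closed set0 by move=> j k; rewrite inE.
have rows0 : {in set0, forall i, porq_row 0 0 i} by move=> i; rewrite inE.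
have [Rm [Q rowsRQ]] := porq_rows_complete closed0 rows0.
by exists Rm, Q; apply/is_porqP.
Qed.

Lemma porq_procedure_step Rm Q i :
  is_porq ord H Rm Q -> procedure_step ord H Rm Q i.
Proof.
move=> porqRQ; have Rii_gt0 := porq_diag_gt0 i porqRQ.
have /is_porqP /(_ i) rowRQ := porqRQ; case: (rowRQ) => eH _ Rm0 normQ _.
split.
  exists (Rm i i *: row i Q); split; first exact: porq_row_proj.
    by rewrite -norm2_gt0 norm2Z normQ mulr1 normr_gt0 gt_eqF.
  by rewrite norm2Z normQ mulr1 gtr0_norm // scalerA mulVf ?gt_eqF ?scale1r.
move=> S Qsub; have freeQsub : row_free Qsub.
  by apply: rowsub_free (porq_row_free porqRQ) _ => s t /enum_val_inj.
have [pinvX XQ1] := is_MP_pinv_trmx_row_free freeQsub.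
exists (invmx (Qsub *m Qsub^T) *m Qsub); split=> // [t | j]; last first.
  by rewrite inE => /Rm0.
rewrite eH (@mulmx_rowsub_enum _ _ _ S) => [|k]; last first.
  by rewrite inE mxE => /Rm0.
by rewrite trmx_mul mulmxA XQ1 mul1mx !mxE.
Qed.

End PartialOrderRQ.

Unset Implicit Arguments.

Theorem proposition7 (R : realType) (d p : nat) (H : 'M[R]_(d, p))
    (ord : rel 'I_d) :
  strict_porder ord -> \rank H = d ->
  (exists! RQ : 'M[R]_d * 'M[R]_(d, p), is_porq ord H RQ.1 RQ.2) /\
  ((forall i j : 'I_d, ord i j -> (i < j)%N) ->
   forall (Rm : 'M[R]_d) (Q : 'M[R]_(d, p)),
     is_porq ord H Rm Q -> procedure_output ord H Rm Q).
Proof.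
move=> [ord_irr ord_trans] rankH.
have freeH : row_free H by rewrite /row_free rankH.
split=> [|_ Rm Q porqRQ i]; last exact: porq_procedure_step.
have [Rm [Q porqRQ]] := porq_exists ord_irr ord_trans freeH.
exists (Rm, Q); split=> // -[R2 Q2] /= porq2.
by have [-> ->] := porq_unique ord_irr ord_trans freeH porqRQ porq2.
Qed.
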